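(* Let $A$ be a local integral domain with infinite residue field and suppose $A^\times=(A^\times)^2$. Then $\mathcal{RB}_0(A)[\tfrac12]=0$ and $\mathcal{RB}(A)[\tfrac12]\cong\mathcal B(A)[\tfrac12]$.
   Context: For a commutative ring $A$: $A^\times$ units; $G_A=A^\times/(A^\times)^2$, $\langle x\rangle$ the class of $x$; $\mathcal R_A=\mathbb Z[G_A]$; $\langle\langle x\rangle\rangle=\langle x\rangle-1$; $\mathcal I_A$ the augmentation ideal; $W_A=\{u\in A^\times:1-u\in A^\times\}$; $M[\tfrac12]=M\otimes\mathbb Z[\tfrac12]$. $\mathcal{RP}(A)$ is the $\mathcal R_A$-module generated by $[x]$, $x\in W_A$, with relations $[x]-[y]+\langle x\rangle[y/x]-\langle x^{-1}-1\rangle\left[\frac{1-x^{-1}}{1-y^{-1}}\right]+\langle 1-x\rangle\left[\frac{1-x}{1-y}\right]=0$ ($x,y,y/x\in W_A$); $\mathcal P(A)=\mathcal{RP}(A)_{G_A}$. With $\tilde S^2(A^\times)=(A^\times\otimes A^\times)/\langle x\otimes y+y\otimes x\rangle$, $\lambda:\mathcal P(A)\to\tilde S^2(A^\times)$, $[x]\mapsto (1-x)\circ x$, $\mathcal B(A)=\ker\lambda$; $\lambda_1:\mathcal{RP}(A)\to\mathcal I_A^2$, $[x]\mapsto\langle\langle1-x\rangle\rangle\langle\langle x\rangle\rangle$; $\lambda_2=\lambda\circ(\mathcal{RP}(A)\to\mathcal P(A))$; $\mathcal{RB}(A)=\ker\lambda_1\cap\ker\lambda_2$; $\mathcal{RB}_0(A)=\ker(\mathcal{RB}(A)\to\mathcal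 B(A))$. *)

From Stdlib Require List.
From HB Require Import structures.
From mathcomp Require Import all_boot all_order all_algebra.
Set Implicit Arguments. Unset Strict Implicit. Unset Printing Implicit Defensive.
Import GRing.Theory.
Local Open Scope ring_scope.

Definition fsum (T : Type) := seq (int * T).

(* The coefficient of [t]: two formal sums represent the same element of the
   free abelian group Z[T] iff they have the same coefficient function. *)
Definition fcoef (T : eqType) (c : fsum T) (t : T) : int :=
  \sum_(p <- c | p.2 == t) p.1.

Definition fscale (T : Type) (k : int) (c : fsum T) : fsum T :=
  [seq (k * p.1, p.2) | p <- c].

Definition fsub (T : Type) (c d : fsum T) : fsum T := c ++ fscale (-1) d.

Definition fmap (T U : Type) (f : T -> fsum U) (c : fsum T) : fsum U :=
  flatten [seq fscale p.1 (f p.2) | p <- c].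

Definition in_span (T : eqType) (R : fsum T -> Prop) (c : fsum T) : Prop :=
  exists rs : seq (int * fsum T),
    (forall p, List.In p rs -> R p.2) /\
    forall t, fcoef c t = fcoef (flatten [seq fscale p.1 p.2 | p <- rs]) t.

(* c = d in the quotient Z[T] / <R>. *)
Definition equiv (T : eqType) (R : fsum T -> Prop) (c d : fsum T) : Prop :=
  in_span R (fsub c d).

Section Ring.
Variable A : comUnitRingType.

Definition unitb (x : A) : bool := x \is a GRing.unit.

Definition W (x : A) : bool := unitb x && unitb (1 - x).

(* Z[G_A] = Z[A^x / (A^x)^2], presented as Z[A] (supported on units) modulo
   <g u^2> = <g>. *)
Definition ZG_rel (r : fsum A) : Prop :=
  exists g u, unitb g /\ unitb u /\ r = [:: (1%:Z, g * u ^+ 2); (-1, g)].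

(* RP(A) as a Z-module: Z-basis of the free R_A-module on W_A is G_A x W_A;
   a generator <g>[x] is encoded by the pair (g, x) with g a unit, modulo
   <g u^2>[x] = <g>[x], and the R_A-submodule of relations is the Z-span of
   <g> . (five-term relation). *)
Definition RP_rel (r : fsum (A * A)) : Prop :=
  (exists g u x, unitb g /\ unitb u /\ W x /\
      r = [:: (1%:Z, (g * u ^+ 2, x)); (-1, (g, x))]) \/
  (exists g x y, unitb g /\ W x /\ W y /\ W (y / x) /\
      r = [:: (1%:Z, (g, x)); (-1, (g, y)); (1, (g * x, y / x));
              (-1, (g * (x^-1 - 1), (1 - x^-1) / (1 - y^-1)));
              (1, (g * (1 - x), (1 - x) / (1 - y)))]).

(* P(A) = RP(A)_{G_A}: the Z-module generated by [x], x in W_A, modulo the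
   five-term relation with all square classes set to 1. *)
Definition P_rel (r : fsum A) : Prop :=
  exists x y, W x /\ W y /\ W (y / x) /\
    r = [:: (1%:Z, x); (-1, y); (1, y / x);
            (-1, (1 - x^-1) / (1 - y^-1)); (1, (1 - x) / (1 - y))].

(* S~^2(A^x) = (A^x (x)_Z A^x) / <x(x)y + y(x)x>, presented on Z[A x A]
   (supported on pairs of units) modulo bilinearity and the symmetric
   relation.  The class of (a, b) is a o b. *)
Definition S2_rel (r : fsum (A * A)) : Prop :=
  (exists a b c, unitb a /\ unitb b /\ unitb c /\
     r = [:: (1%:Z, (a * b, c)); (-1, (a, c)); (-1, (b, c))]) \/
  (exists a b c, unitb a /\ unitb b /\ unitb c /\
     r = [:: (1%:Z, (a, b * c)); (-1, (a, b)); (-1, (a, c))]) \/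
  (exists a b, unitb a /\ unitb b /\
     r = [:: (1%:Z, (a, b)); (1, (b, a))]).

Definition RP_supp (c : fsum (A * A)) : bool :=
  all (fun p => unitb p.2.1 && W p.2.2) c.
Definition P_supp (d : fsum A) : bool := all (fun p => W p.2) d.

(* lambda_1 : <g>[x] |-> <g> <<1-x>> <<x>>  in Z[G_A] *)
Definition lam1_gen (p : A * A) : fsum A :=
  let g := p.1 in let x := p.2 in
  [:: (1%:Z, g * (1 - x) * x); (-1, g * (1 - x)); (-1, g * x); (1, g)].
Definition lam1 (c : fsum (A * A)) : fsum A := fmap lam1_gen c.

(* the projection RP(A) -> P(A) = RP(A)_{G_A} : <g>[x] |-> [x] *)
Definition piP (c : fsum (A * A)) : fsum A := fmap (fun p => [:: (1%:Z, p.2)]) c.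

Definition lam (d : fsum A) : fsum (A * A) := fmap (fun x => [:: (1%:Z, (1 - x, x))]) d.

Definition lam2 (c : fsum (A * A)) : fsum (A * A) := lam (piP c).

(* c represents an element of RB(A) = ker lambda_1 /\ ker lambda_2 *)
Definition in_RB (c : fsum (A * A)) : Prop :=
  RP_supp c /\ equiv ZG_rel (lam1 c) [::] /\ equiv S2_rel (lam2 c) [::].

(* d represents an element of B(A) = ker lambda *)
Definition in_B (d : fsum A) : Prop :=
  P_supp d /\ equiv S2_rel (lam d) [::].

(* c represents an element of RB_0(A) = ker (RB(A) -> B(A)) *)
Definition in_RB0 (c : fsum (A * A)) : Prop :=
  in_RB c /\ equiv P_rel (piP c) [::].

(* RB_0(A)[1/2] = 0 : every element of RB_0(A) is killed by a power of 2. *)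
Definition RB0_half_zero : Prop :=
  forall c, in_RB0 c -> exists n : nat, equiv RP_rel (fscale (2 ^+ n) c) [::].

Definition RB_B_half_iso : Prop :=
  (forall c, in_RB c -> forall n : nat,
      equiv P_rel (fscale (2 ^+ n) (piP c)) [::] ->
      exists m : nat, equiv RP_rel (fscale (2 ^+ m) c) [::]) /\
  (forall d, in_B d -> exists c (n : nat),
      in_RB c /\ equiv P_rel (piP c) (fscale (2 ^+ n) d)).

(* A is local: the non-units form an ideal (closure under addition suffices). *)
Definition is_local : Prop :=
  forall x y : A, ~~ unitb x -> ~~ unitb y -> ~~ unitb (x + y).

(* the residue field A/m is infinite: for every finite list of elements there
   is an element whose class differs from all their classes (x - y not in m,
   i.e. x - y a unit since A is local). *)
Definition residue_field_infinite : Prop :=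
  forall s : seq A, exists x : A, all (fun y => unitb (x - y)) s.

Definition units_are_squares : Prop :=
  forall u : A, unitb u -> exists v : A, u = v ^+ 2.

End Ring.

From Pilot Require Import Defs.
From mathcomp Require Import all_boot all_order all_algebra.
From mathcomp Require Import ring.
From Stdlib Require List.
Set Implicit Arguments. Unset Strict Implicit. Unset Printing Implicit Defensive.
Import GRing.Theory.
Local Open Scope ring_scope.

(* Since every unit is a square, the group G_A = A^x/(A^x)^2 is trivial.
   Hence R_A = Z, the coinvariant map RP(A) -> P(A) is an isomorphism (its
   inverse sends [x] to <1>[x], and <g>[x] = <1>[x] because g is a square),
   lambda_1 lands in I_A^2 = 0 and lambda_2 = lambda.  So RB(A) -> B(A) is an
   isomorphism and RB_0(A) = 0 even before inverting 2. *)

Section FormalSums.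
Variable T : eqType.
Implicit Types (c d : fsum T) (R : fsum T -> Prop).

Lemma fcoef_nil t : fcoef ([::] : fsum T) t = 0.
Proof. by rewrite /fcoef big_nil. Qed.

Lemma fcoef_cons k x c t :
  fcoef ((k, x) :: c) t = (if x == t then k else 0) + fcoef c t.
Proof. by rewrite /fcoef big_cons /=; case: (x == t); rewrite ?add0r. Qed.

Lemma fcoef_cat c d t : fcoef (c ++ d) t = fcoef c t + fcoef d t.
Proof. by rewrite /fcoef big_cat. Qed.

Lemma fcoef_scale k c t : fcoef (fscale k c) t = k * fcoef c t.
Proof.
elim: c => [|[a x] c IH]; first by rewrite fcoef_nil mulr0.
rewrite [fscale _ _]/= !fcoef_cons IH mulrDr.
by case: (x == t); rewrite ?mulr0.
Qed.

Lemma fcoef_sub c d t : fcoef (fsub c d) t = fcoef c t - fcoef d t.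
Proof. by rewrite /fsub fcoef_cat fcoef_scale mulN1r. Qed.

Lemma fcoef_flatten (S : Type) (F : S -> fsum T) s t :
  fcoef (flatten (map F s)) t = \sum_(p <- s) fcoef (F p) t.
Proof.
elim: s => [|p s IH]; first by rewrite big_nil fcoef_nil.
by rewrite /= fcoef_cat IH big_cons.
Qed.

Lemma sum_fcoef (h : T -> int) c s :
  uniq s -> {subset [seq p.2 | p <- c] <= s} ->
  \sum_(p <- c) p.1 * h p.2 = \sum_(t <- s) fcoef c t * h t.
Proof.
move=> uniq_s; elim: c => [|[k x] c IH] sub_cs.
  by rewrite big_nil big1 // => t _; rewrite fcoef_nil mul0r.
have xs : x \in s by apply: sub_cs; rewrite mem_head.
rewrite big_cons IH => [|y yc]; last by apply: sub_cs; rewrite inE yc orbT.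
under [RHS]eq_bigr => t _ do rewrite fcoef_cons mulrDl.
rewrite big_split /=; congr (_ + _).
rewrite (bigD1_seq x) //= eqxx big1 ?addr0 // => t tx.
by rewrite eq_sym (negPf tx) mul0r.
Qed.

Lemma eq_in_span R c d :
  (forall t, fcoef c t = fcoef d t) -> in_span R c -> in_span R d.
Proof. by move=> e [rs [Rrs ers]]; exists rs; split=> // t; rewrite -e. Qed.

Lemma in_span_nil R : in_span R [::].
Proof. by exists [::]; split=> // t; rewrite fcoef_nil. Qed.

Lemma in_span_gen R r : R r -> in_span R r.
Proof.
move=> Rr; exists [:: (1, r)]; split; first by move=> p [<-|[]].
by move=> t; rewrite /= cats0 fcoef_scale mul1r.
Qed.

Lemma in_span_cat R c d : in_span R c -> in_span R d -> in_span R (c ++ d).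
Proof.
move=> [r1 [R1 e1]] [r2 [R2 e2]]; exists (r1 ++ r2); split.
  by move=> p /(List.in_app_or r1 r2 p) [] ?; [apply: R1 | apply: R2].
by move=> t; rewrite fcoef_cat e1 e2 map_cat flatten_cat fcoef_cat.
Qed.

Lemma in_span_scale R k c : in_span R c -> in_span R (fscale k c).
Proof.
move=> [rs [Rrs ers]]; exists [seq (k * p.1, p.2) | p <- rs]; split.
  by move=> p /(List.in_map_iff _ rs p) [q [<- ?]] /=; apply: Rrs.
move=> t; rewrite fcoef_scale ers -map_comp !fcoef_flatten big_distrr /=.
by apply: eq_bigr => p _; rewrite !fcoef_scale mulrA.
Qed.

Lemma in_span_sub R c d : in_span R c -> in_span R d -> in_span R (fsub c d).
Proof. by move=> Rc Rd; apply: in_span_cat => //; apply: in_span_scale. Qed.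

Lemma equiv_nilE R c : Defs.equiv R c [::] <-> in_span R c.
Proof. by split; apply: eq_in_span => t; rewrite fcoef_sub fcoef_nil subr0. Qed.

End FormalSums.

Section FormalMaps.
Variables T U : eqType.
Implicit Types (c d : fsum T) (f : T -> fsum U).

Lemma fmap_cons f k x c : fmap f ((k, x) :: c) = fscale k (f x) ++ fmap f c.
Proof. by []. Qed.

Lemma fmap_cat f c d : fmap f (c ++ d) = fmap f c ++ fmap f d.
Proof. by rewrite /fmap map_cat flatten_cat. Qed.

Lemma fcoef_fmap f c u :
  fcoef (fmap f c) u = \sum_(p <- c) p.1 * fcoef (f p.2) u.
Proof.
by rewrite /fmap fcoef_flatten; apply: eq_bigr => p _; rewrite fcoef_scale.
Qed.

Lemma eq_fcoef_fmap f c d :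
  (forall t, fcoef c t = fcoef d t) ->
  forall u, fcoef (fmap f c) u = fcoef (fmap f d) u.
Proof.
move=> e u; rewrite !fcoef_fmap.
set s := undup [seq p.2 | p <- c ++ d].
have sub_cd (b : fsum T) : {subset b <= c ++ d} ->
    {subset [seq p.2 | p <- b] <= s}.
  by move=> sub_b _ /mapP [p pb ->]; rewrite mem_undup map_f ?sub_b.
rewrite !(@sum_fcoef _ (fun t => fcoef (f t) u) _ s (undup_uniq _)).
- by apply: eq_bigr => t _; rewrite e.
- by apply: sub_cd => p pd; rewrite mem_cat pd orbT.
- by apply: sub_cd => p pc; rewrite mem_cat pc.
Qed.

Lemma fcoef_fmap_scale f k c u :
  fcoef (fmap f (fscale k c)) u = k * fcoef (fmap f c) u.
Proof.
rewrite !fcoef_fmap big_map big_distrr /=.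
by apply: eq_bigr => p _; rewrite mulrA.
Qed.

Lemma in_span_fmap (R : fsum T -> Prop) (S : fsum U -> Prop) f c :
  (forall r, R r -> in_span S (fmap f r)) -> in_span R c -> in_span S (fmap f c).
Proof.
move=> RS [rs [Rrs ers]].
apply: (eq_in_span (c := fmap f (flatten [seq fscale p.1 p.2 | p <- rs]))).
  by apply: eq_fcoef_fmap => t; rewrite ers.
elim: rs Rrs {ers} => [|[k r] rs IH] Rrs; first exact: in_span_nil.
rewrite /= fmap_cat; apply: in_span_cat; last by apply: IH => p Hp; apply: Rrs; right.
apply: (eq_in_span (c := fscale k (fmap f r))).
  by move=> u; rewrite fcoef_fmap_scale fcoef_scale.
by apply/in_span_scale/RS; apply: (Rrs (k, r)); left.
Qed.

End FormalMaps.

Section Units.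
Variable A : comUnitRingType.
Implicit Types x y : A.

Lemma W_inv x : W x -> W x^-1.
Proof.
rewrite /W /unitb => /andP [Ux U1x]; rewrite unitrV Ux /=.
have -> : 1 - x^-1 = (x - 1) / x by rewrite mulrBl divrr // mul1r.
by rewrite unitrM unitrV Ux -opprB unitrN U1x.
Qed.

Lemma W_div_1sub x y : W x -> W y -> W (y / x) -> W ((1 - x) / (1 - y)).
Proof.
rewrite /W /unitb => /andP [Ux U1x] /andP [_ U1y] /andP [_ U1yx].
rewrite unitrM unitrV U1x U1y /=.
have -> : 1 - (1 - x) / (1 - y) = x * (1 - y / x) / (1 - y).
  rewrite -{1}(divrr U1y) -mulrBl; congr (_ * _).
  by rewrite mulrBr mulr1 mulrCA divrr // mulr1; ring.
by rewrite !unitrM unitrV Ux U1yx U1y.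
Qed.

Lemma W_div_1subV x y : W x -> W y -> W (y / x) -> W ((1 - x^-1) / (1 - y^-1)).
Proof.
move=> Wx Wy Wyx; apply: W_div_1sub; try exact: W_inv.
have /andP [Ux _] := Wx; have /andP [Uy _] := Wy.
have -> : y^-1 / x^-1 = (y / x)^-1 by rewrite invrK invrM ?unitrV // invrK mulrC.
exact: W_inv.
Qed.

End Units.

Section TrivialSquareClasses.
Variable A : comUnitRingType.
Hypothesis units_sq : units_are_squares A.

Lemma unit_square (g : A) : unitb g -> exists2 v : A, unitb v & g = v ^+ 2.
Proof.
move=> Ug; have [v gE] := units_sq Ug; exists v => //.
by rewrite /unitb -(unitrX_pos v (n := 2)) // -gE.
Qed.

Definition liftRP (d : fsum A) : fsum (A * A) := fmap (fun x => [:: (1, (1, x))]) d.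

Lemma liftRP_cons k x d : liftRP ((k, x) :: d) = (k * 1, (1, x)) :: liftRP d.
Proof. by []. Qed.

Lemma piP_cons k (p : A * A) c : Defs.piP ((k, p) :: c) = (k * 1, p.2) :: Defs.piP c.
Proof. by []. Qed.

Lemma piP_liftRP d : Defs.piP (liftRP d) = d.
Proof. by elim: d => // [[k x] d IH]; rewrite liftRP_cons piP_cons IH !mulr1. Qed.

Lemma RP_supp_liftRP d : P_supp d -> RP_supp (liftRP d).
Proof.
elim: d => // [[k x] d IH] /andP [Wx /IH Sd].
by rewrite liftRP_cons /RP_supp /= /unitb unitr1 Wx.
Qed.

Lemma RP_supp_scale k (c : fsum (A * A)) : RP_supp c -> RP_supp (fscale k c).
Proof. by rewrite /RP_supp all_map. Qed.

Lemma RP_rel_square (g x : A) :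
  unitb g -> W x -> RP_rel [:: (1, (g, x)); (-1, (1, x))].
Proof.
move=> Ug Wx; have [v Uv ->] := unit_square Ug; left.
by exists 1, v, x; rewrite /unitb mul1r unitr1.
Qed.

Lemma equiv_liftRP_piP c : RP_supp c -> Defs.equiv (@RP_rel A) c (liftRP (Defs.piP c)).
Proof.
elim: c => [_|[k [g x]] c IH]; first exact: in_span_nil.
rewrite /RP_supp /= => /andP [/andP [Ug Wx] Sc].
apply: (eq_in_span (c := fscale k [:: (1, (g, x)); (-1, (1, x))] ++
                          fsub c (liftRP (Defs.piP c)))); last first.
  by apply: in_span_cat; [apply/in_span_scale/in_span_gen/RP_rel_square | exact: IH].
move=> t; rewrite piP_cons liftRP_cons.
rewrite !fcoef_cat !fcoef_scale !fcoef_cons !fcoef_nil.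
by case: ((g, x) == t); case: ((1, x) == t); ring.
Qed.

Lemma liftRP_P_rel r : P_rel r -> in_span (@RP_rel A) (liftRP r).
Proof.
move=> [x [y [Wx [Wy [Wyx ->]]]]].
(* The five-term relation of RP(A) at <1> differs from the lift of the one of
   P(A) only by the square classes <x>, <x^-1 - 1>, <1 - x>, which are trivial. *)
set r' : fsum (A * A) := [:: (1, (1, x)); (-1, (1, y)); (1, (1 * x, y / x));
                            (-1, (1 * (x^-1 - 1), (1 - x^-1) / (1 - y^-1)));
                            (1, (1 * (1 - x), (1 - x) / (1 - y)))].
have RP_r' : in_span (@RP_rel A) r'.
  by apply: in_span_gen; right; exists 1, x, y; rewrite /unitb unitr1.
have supp_r' : RP_supp r'.
  have /andP [Ux U1x] : (x \is a GRing.unit) && (1 - x \is a GRing.unit) := Wx.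
  have /andP [_ U1xV] : _ && (1 - x^-1 \is a GRing.unit) := W_inv Wx.
  rewrite /RP_supp /= !mul1r /unitb unitr1 Ux U1x -opprB unitrN U1xV.
  by rewrite Wx Wy Wyx W_div_1sub // W_div_1subV.
have piP_r' : Defs.piP r' = [:: (1, x); (-1, y); (1, y / x);
                       (-1, (1 - x^-1) / (1 - y^-1)); (1, (1 - x) / (1 - y))].
  by rewrite /r' !piP_cons !mulr1.
apply: (eq_in_span (c := fsub r' (fsub r' (liftRP (Defs.piP r'))))).
  by move=> t; rewrite piP_r' !fcoef_sub; ring.
by apply: in_span_sub; last exact: equiv_liftRP_piP.
Qed.

Lemma in_span_RP_of_P c :
  RP_supp c -> in_span (@P_rel A) (Defs.piP c) -> in_span (@RP_rel A) c.
Proof.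
move=> Sc Pc; apply: (eq_in_span (c := fsub c (liftRP (Defs.piP c)) ++ liftRP (Defs.piP c))).
  by move=> t; rewrite fcoef_cat fcoef_sub subrK.
apply: in_span_cat; first exact: equiv_liftRP_piP.
exact: in_span_fmap liftRP_P_rel Pc.
Qed.

Lemma ZG_rel_unit (g : A) : unitb g -> ZG_rel [:: (1, g); (-1, 1)].
Proof.
move=> Ug; have [v Uv ->] := unit_square Ug.
by exists 1, v; rewrite /unitb mul1r unitr1.
Qed.

Lemma lam1_gen_ZG x : W x -> in_span (@ZG_rel A) (lam1_gen (1, x)).
Proof.
rewrite /W /unitb => /andP [Ux U1x].
(* <<a>><<b>> = (<ab> - 1) - (<a> - 1) - (<b> - 1) *)
set zg := fun u : A => [:: (1%:Z, u); (-1, 1)].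
apply: (eq_in_span (c := fsub (fsub (zg (1 * (1 - x) * x)) (zg (1 * (1 - x)))) (zg (1 * x)))).
  move=> t; rewrite !fcoef_sub !fcoef_cons !fcoef_nil /=.
  by case: (_ * _ * _ == t); case: (1 * (1 - x) == t); case: (1 * x == t); case: (1 == t); ring.
by apply: in_span_sub; [apply: in_span_sub |];
  apply/in_span_gen/ZG_rel_unit; rewrite /unitb !mul1r ?unitrM ?Ux ?U1x.
Qed.

Lemma lam1_liftRP d : P_supp d -> in_span (@ZG_rel A) (lam1 (liftRP d)).
Proof.
elim: d => [_|[k x] d IH /andP [Wx /IH ZGd]]; first exact: in_span_nil.
rewrite liftRP_cons /lam1 fmap_cons; apply: in_span_cat => //.
exact/in_span_scale/lam1_gen_ZG.
Qed.

Lemma RB0_half_zero_of_units_sq : RB0_half_zero A.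
Proof.
move=> c [[Sc _] Pc]; exists 0%N.
by apply/equiv_nilE/in_span_scale/in_span_RP_of_P/equiv_nilE.
Qed.

Lemma RB_B_half_iso_of_units_sq : RB_B_half_iso A.
Proof.
split=> [c [Sc _] n Pn | d [Sd lam_d]].
  exists n; apply/equiv_nilE/in_span_RP_of_P; first exact: RP_supp_scale.
  move/equiv_nilE: Pn; apply: eq_in_span => t.
  by rewrite fcoef_scale /Defs.piP fcoef_fmap_scale.
exists (liftRP d), 0%N; rewrite /in_RB /lam2 piP_liftRP.
split; first by split; [exact: RP_supp_liftRP | split=> //; apply/equiv_nilE/lam1_liftRP].
apply: (eq_in_span (c := [::])); last exact: in_span_nil.
by move=> t; rewrite fcoef_nil fcoef_sub fcoef_scale expr0 mul1r subrr.
Qed.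

End TrivialSquareClasses.

Theorem mainTheorem3 (A : idomainType)
  (hloc : is_local A) (hinf : residue_field_infinite A)
  (hsq : units_are_squares A) :
  RB0_half_zero A /\ RB_B_half_iso A.
Proof. by split; [apply: RB0_half_zero_of_units_sq | apply: RB_B_half_iso_of_units_sq]. Qed.
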